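(* Let $S$ be a connected graph. Then every connected $S$-free graph is super-edge-connected if and only if $S$ is an induced subgraph of $P_3$.
   Context: All graphs are finite and simple. $P_n$ denotes the path on $n$ vertices. For a graph $S$, a graph $G$ is $S$-free if $G$ has no induced subgraph isomorphic to $S$. An edge-cut of a connected graph $G$ is a set $F\subseteq E(G)$ such that $G-F$ is disconnected; the edge-connectivity $\kappa'(G)$ is the minimum size of an edge-cut. A connected graph $G$ is super-edge-connected if every minimum edge-cut of $G$ is the set of all edges incident with some single vertex, i.e. every minimum edge-cut isolates a vertex. *)

From mathcomp Require Import all_boot.
Set Implicit Arguments. Unset Strict Implicit. Unset Printing Implicit Defensive.

Record sgraph := SGraph {
  vert :> finType;
  adj : rel vert;
  adj_sym : symmetric adj;
  adj_irr : irreflexive adj }.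

Definition connected_rel (T : finType) (r : rel T) : Prop :=
  (exists x : T, True) /\ forall x y : T, connect r x y.

Definition connected (G : sgraph) : Prop := connected_rel (@adj G).

Definition edges (G : sgraph) : {set {set G}} :=
  [set [set x; y] | x in G, y in G & adj x y].

Definition remove_edges (G : sgraph) (F : {set {set G}}) : rel G :=
  fun x y => adj x y && ([set x; y] \notin F).

Definition is_edge_cut (G : sgraph) (F : {set {set G}}) : Prop :=
  F \subset edges G /\ ~ connected_rel (remove_edges F).

Definition is_min_edge_cut (G : sgraph) (F : {set {set G}}) : Prop :=
  is_edge_cut F /\ forall F' : {set {set G}}, is_edge_cut F' -> #|F| <= #|F'|.

Definition incident_edges (G : sgraph) (v : G) : {set {set G}} :=
  [set E0 in edges G | v \in E0].

Definition super_edge_connected (G : sgraph) : Prop :=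
  connected G /\
  forall F, is_min_edge_cut F -> exists v : G, F = incident_edges v.

Definition induced_sub (S G : sgraph) : Prop :=
  exists f : S -> G, injective f /\ forall x y : S, adj x y = adj (f x) (f y).

Definition free (S G : sgraph) : Prop := ~ induced_sub S G.

Definition P3_adj : rel 'I_3 := fun i j => (i.+1 == j :> nat) || (j.+1 == i :> nat).

Lemma P3_sym : symmetric P3_adj.
Proof. by move=> i j; rewrite /P3_adj orbC. Qed.

Lemma P3_irr : irreflexive P3_adj.
Proof. by move=> i; rewrite /P3_adj orbb; apply/negbTE; rewrite neq_ltn ltnSn orbT. Qed.

Definition P3 : sgraph := SGraph P3_sym P3_irr.

From mathcomp Require Import all_boot zify.
From Stdlib Require Import Classical.
Set Implicit Arguments. Unset Strict Implicit. Unset Printing Implicit Defensive.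

(* (<-) If S embeds in P3, every connected S-free graph G is P3-free; a
   connected graph with two non-adjacent vertices contains an induced P3
   (follow an edge leaving the closed neighbourhood of one of them), so G is
   complete.  In a complete graph a minimum cut F contains all |A|*|B| edges
   between the two sides A, B of the split it induces, while |F| is at most the
   degree |A|+|B|-1 of a vertex; hence one side is a single vertex v and F is
   the set of edges at v.

   (->) P4 and C4 are connected and not super-edge-connected (the middle edge
   of P4, resp. two opposite edges of C4, form a minimum cut isolating no
   vertex), so S embeds in both.  An embedding of S into P4 cannot be onto, since P4 has a
   vertex with two non-neighbours and C4 has none; so it misses a vertex and,
   S being connected, lands in three consecutive vertices, i.e. in P3. *)

Section EdgeCuts.
Variable G : sgraph.
Implicit Types (F : {set {set G}}) (A : {set G}) (u v w x y z s t : G).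

Lemma adjC x y : adj x y = adj y x. Proof. exact: adj_sym. Qed.

Lemma adj_neq x y : adj x y -> x != y.
Proof. by apply: contraTneq => ->; rewrite adj_irr. Qed.

Lemma set2C x y : [set x; y] = [set y; x]. Proof. by rewrite setUC. Qed.

Lemma edgesP x y : adj x y -> [set x; y] \in edges G.
Proof. by move=> hxy; apply/imset2P; exists x y; rewrite ?inE. Qed.

Lemma incidentP v E :
  reflect (exists2 r, adj v r & E = [set v; r]) (E \in incident_edges v).
Proof.
apply: (iffP idP) => [|[r hr ->]]; last by rewrite inE edgesP //= !inE eqxx.
rewrite inE => /andP[/imset2P[x y _]]; rewrite inE => /andP[_ hxy] -> /set2P[] ->.
  by exists y.
by exists x; rewrite 1?adjC 1?set2C.
Qed.

Lemma closed_not_connected F (a : pred G) x y :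
  closed (remove_edges F) a -> a x -> ~~ a y -> ~ connected_rel (remove_edges F).
Proof.
by move=> cl ax ay [_ /(_ x y) /(closed_connect cl)]; rewrite !unfold_in ax (negbTE ay).
Qed.

Lemma not_connected_pair F x0 : ~ connected_rel (remove_edges F) ->
  exists u y, ~~ connect (remove_edges F) u y.
Proof.
move=> nc; case: (boolP [forall u, forall y, connect (remove_edges F) u y]).
  by move=> /forallP all; case: nc; split; [exists x0 | move=> u; apply/forallP].
by rewrite negb_forall => /existsP[u]; rewrite negb_forall => /existsP[y]; exists u, y.
Qed.

Lemma leaving_edge_in_cut F u s t : connect (remove_edges F) u s ->
  ~~ connect (remove_edges F) u t -> adj s t -> [set s; t] \in F.
Proof.
move=> us nut hst; apply: contraNT nut => stF.
by apply: connect_trans us (connect1 _); rewrite /remove_edges hst.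
Qed.

Lemma leaving_edge (a : pred G) x y : connected G -> a x -> ~~ a y ->
  exists s t, [/\ adj s t, a s & ~~ a t].
Proof.
move=> [_ Gc] ax ay.
case: (boolP [forall s, forall t, adj s t ==> (a s == a t)]) => [/forallP same|].
  have cl : closed (@adj G) a.
    by move=> s t hst; move/forallP/(_ t): (same s); rewrite hst => /eqP.
  by move: (closed_connect cl (Gc x y)); rewrite !unfold_in ax (negbTE ay).
rewrite negb_forall => /existsP[s]; rewrite negb_forall => /existsP[t].
rewrite negb_imply => /andP[hst]; case As: (a s); case At: (a t) => //= _.
  by exists s, t; rewrite As At.
by exists t, s; rewrite adjC As At.
Qed.

Lemma edge_cut_gt0 F : connected G -> is_edge_cut F -> 0 < #|F|.
Proof.
move=> [ne Gc] [_ nc]; have [F0 | [E EF]] := set_0Vmem F; last by apply/card_gt0P; exists E.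
case: nc; rewrite F0; split=> // x y; rewrite (@eq_connect _ _ (@adj G)) // => a b; by rewrite /remove_edges inE andbT.
Qed.

Lemma incident_cut v w : w != v -> is_edge_cut (incident_edges v).
Proof.
move=> wv; split; first by apply/subsetP=> E; rewrite inE => /andP[].
apply: (@closed_not_connected _ (pred1 v) v w); rewrite /= ?eqxx //.
move=> x y /andP[hxy]; apply: contraNeq => xy; rewrite !inE in xy.
apply/incidentP; case: (eqVneq x v) xy => [<- _ | _]; first by exists y.
rewrite eq_sym eqbF_neg negbK => /eqP <-.
by exists x; rewrite 1?adjC 1?set2C.
Qed.

Lemma min_cut_incident F v w : is_min_edge_cut F -> w != v ->
  incident_edges v \subset F -> F = incident_edges v.
Proof.
move=> [_ Fmin] wv sub; apply/esym/eqP; rewrite eqEcard sub /=.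
exact: Fmin (incident_cut wv).
Qed.

Lemma card_incident v : #|incident_edges v| <= #|G|.-1.
Proof.
rewrite -(cardsC1 v); apply: leq_trans (leq_imset_card (fun r => [set v; r]) _).
apply/subset_leq_card/subsetP => E /incidentP[r hr ->].
by apply: imset_f; rewrite !inE eq_sym adj_neq.
Qed.

Definition cross_pairs A : {set {set G}} := [set [set s; t] | s in A, t in ~: A].

Lemma card_cross_pairs A : #|cross_pairs A| = #|A| * #|~: A|.
Proof.
rewrite /cross_pairs curry_imset2X card_in_imset ?cardsX //.
move=> [s t] [s' t'] /setXP[sA tA] /setXP[s'A t'A] /= E.
have mem r : (r \in [set s; t]) = (r \in [set s'; t']) by rewrite E.
have ss' : s = s'.
  move: (mem s); rewrite !inE eqxx => /esym/orP[/eqP //| /eqP st'].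
  by move: t'A; rewrite inE -st' sA.
move: (mem t); rewrite -ss' !inE eqxx orbT => /esym/orP[/eqP ts|/eqP -> //].
by move: tA; rewrite inE ts sA.
Qed.

Lemma cross_pairsC A : cross_pairs (~: A) = cross_pairs A.
Proof.
apply/setP=> E; apply/imset2P/imset2P=> -[s t hs ht ->];
  by exists t s; rewrite ?setCK in ht * => //; apply: set2C.
Qed.

Lemma incident_sub_cross A v : A = [set v] -> incident_edges v \subset cross_pairs A.
Proof.
move=> Av; apply/subsetP=> E /incidentP[r hr ->].
by apply: imset2_f; rewrite Av !inE // eq_sym adj_neq.
Qed.

Lemma one_side_singleton a b : 0 < a -> 0 < b -> a * b <= (a + b).-1 ->
  (a == 1) || (b == 1).
Proof.
move=> a0 b0 ab; have /eqP : (a - 1) * (b - 1) = 0 by nia.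
by rewrite muln_eq0 => /orP[]; lia.
Qed.

(* Complete graphs are super-edge-connected: a minimum cut F contains all
   |A| * |~A| pairs across the component A of a vertex in G - F, but at most
   |A| + |~A| - 1 edges (a degree); so one side is a single vertex, whose edges
   then make up F. *)
Lemma complete_super_edge_connected :
  (forall x y, x != y -> adj x y) -> connected G -> super_edge_connected G.
Proof.
move=> complete Gc; split=> // F Fmin; have [[_ Fnc] Fle] := Fmin.
have [[x0 _] _] := Gc.
have [u [y nuy]] := not_connected_pair x0 Fnc.
pose A := [set z | connect (remove_edges F) u z].
have uA : u \in A by rewrite inE connect0.
have yA : y \in ~: A by rewrite !inE.
have yu : y != u by apply: contraNneq nuy => ->; apply: connect0.
have crossF : cross_pairs A \subset F.
  apply/subsetP=> _ /imset2P[s t sA tA ->]; rewrite !inE in sA tA.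
  have st : s != t by apply: contraNneq tA => <-.
  by apply: (leaving_edge_in_cut sA tA); apply: complete.
have : #|A| * #|~: A| <= (#|A| + #|~: A|).-1.
  rewrite cardsC -card_cross_pairs; apply: leq_trans (subset_leq_card crossF) _.
  exact: leq_trans (Fle _ (incident_cut yu)) (card_incident u).
have A0 : 0 < #|A| by apply/card_gt0P; exists u.
have B0 : 0 < #|~: A| by apply/card_gt0P; exists y.
case/(one_side_singleton A0 B0)/orP => /cards1P[v Av].
  move: uA; rewrite Av inE => /eqP uv; subst v; exists u.
  exact: min_cut_incident Fmin yu (subset_trans (incident_sub_cross Av) crossF).
move: yA; rewrite Av inE => /eqP yv; subst v; exists y.
apply: min_cut_incident Fmin (_ : u != y) _; first by rewrite eq_sym.
by rewrite -cross_pairsC in crossF; apply: subset_trans (incident_sub_cross Av) crossF.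
Qed.

Lemma induced_P3_of_path x z w : adj x z -> adj z w -> ~~ adj x w -> x != w ->
  induced_sub P3 G.
Proof.
move=> hxz hzw nxw xw; have xz := adj_neq hxz; have zw := adj_neq hzw.
exists (fun i : 'I_3 => match val i with 0 => x | 1 => z | _ => w end); split.
  move=> [i hi] [j hj] /= eq_ij; apply: val_inj => /=.
  move: i j hi hj eq_ij => [|[|[|i]]] [|[|[|j]]] //= _ _ /eqP;
  by rewrite ?(eq_sym z x) ?(eq_sym w x) ?(eq_sym w z) ?(negbTE xz) ?(negbTE zw) ?(negbTE xw).
move=> [[|[|[|i]]] ?] [[|[|[|j]]] ?] //=; rewrite ?adj_irr //;
  by rewrite ?hxz ?hzw ?(negbTE nxw) // adjC ?hxz ?hzw ?(negbTE nxw).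
Qed.

(* A connected graph with two distinct non-adjacent vertices x, y contains an
   induced P3: take an edge s - t leaving the closed neighbourhood of x. *)
Lemma induced_P3_of_nonadjacent x y : connected G -> x != y -> ~~ adj x y ->
  induced_sub P3 G.
Proof.
move=> Gc xy nxy.
pose closed_nbhd z := (z == x) || adj x z.
have [s [t [hst]]] : exists s t, [/\ adj s t, closed_nbhd s & ~~ closed_nbhd t].
  by apply: (leaving_edge Gc (x := x) (y := y)); rewrite /closed_nbhd ?eqxx // negb_or (eq_sym y x) xy.
rewrite /closed_nbhd negb_or => /orP[/eqP sx | hxs] /andP[tx nxt].
  by rewrite -sx hst in nxt.
by apply: (induced_P3_of_path hxs hst nxt); rewrite eq_sym.
Qed.

End EdgeCuts.

Lemma induced_sub_trans (S H K : sgraph) :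
  induced_sub S H -> induced_sub H K -> induced_sub S K.
Proof.
move=> [f [fi fa]] [g [gi ga]]; exists (g \o f); split; first exact: inj_comp.
by move=> x y; rewrite fa ga.
Qed.

(* The backward direction: for S inside P3, connected S-free graphs are
   P3-free, hence complete, hence super-edge-connected. *)
Lemma super_edge_connected_of_sub_P3 (S : sgraph) : induced_sub S P3 ->
  forall G : sgraph, connected G -> free S G -> super_edge_connected G.
Proof.
move=> SP3 G Gc Sfree; apply: (complete_super_edge_connected _ Gc) => x y xy.
apply/negPn/negP => nxy; apply: Sfree; apply: induced_sub_trans SP3 _.
exact: induced_P3_of_nonadjacent Gc xy nxy.
Qed.

Lemma connected_consecutive n (r : rel 'I_n.+1) : symmetric r ->
  (forall i : 'I_n.+1, i < n -> r i (inord i.+1)) -> connected_rel r.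
Proof.
move=> r_sym step; split; first by exists ord0.
have from0 (i : 'I_n.+1) : connect r ord0 i.
  case: i => i; elim: i => [|i IH] lti.
    by rewrite (_ : Ordinal lti = ord0) ?connect0 //; apply: val_inj.
  apply: connect_trans (IH (ltnW lti)) (connect1 _).
  rewrite (_ : Ordinal lti = inord i.+1); first exact: step.
  by apply: val_inj; rewrite /= inordK.
by move=> x y; apply: connect_trans (from0 y); rewrite (sym_connect_sym r_sym) from0.
Qed.

Definition v0 : 'I_4 := @Ordinal 4 0 isT.
Definition v1 : 'I_4 := @Ordinal 4 1 isT.
Definition v2 : 'I_4 := @Ordinal 4 2 isT.
Definition v3 : 'I_4 := @Ordinal 4 3 isT.

Lemma I4P (P : 'I_4 -> Prop) : P v0 -> P v1 -> P v2 -> P v3 -> forall i, P i.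
Proof.
move=> h0 h1 h2 h3 [[|[|[|[|m]]]] lt4] //.
- by rewrite (_ : Ordinal lt4 = v0) //; apply: val_inj.
- by rewrite (_ : Ordinal lt4 = v1) //; apply: val_inj.
- by rewrite (_ : Ordinal lt4 = v2) //; apply: val_inj.
- by rewrite (_ : Ordinal lt4 = v3) //; apply: val_inj.
Qed.

Definition P4_adj : rel 'I_4 := fun i j => (i.+1 == j :> nat) || (j.+1 == i :> nat).
Lemma P4_sym : symmetric P4_adj. Proof. by move=> i j; rewrite /P4_adj orbC. Qed.
Lemma P4_irr : irreflexive P4_adj. Proof. by elim/I4P. Qed.
Definition P4 : sgraph := SGraph P4_sym P4_irr.

Definition C4_adj : rel 'I_4 := fun i j => (ordS i == j) || (ordS j == i).
Lemma C4_sym : symmetric C4_adj. Proof. by move=> i j; rewrite /C4_adj orbC. Qed.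
Lemma C4_irr : irreflexive C4_adj. Proof. by elim/I4P. Qed.
Definition C4 : sgraph := SGraph C4_sym C4_irr.

Lemma P4_connected : connected P4.
Proof.
by apply: connected_consecutive P4_sym _ => i lti; rewrite /P4_adj /= inordK ?eqxx.
Qed.

Lemma C4_connected : connected C4.
Proof.
apply: connected_consecutive C4_sym _ => i lti; apply/orP; left; apply/eqP/val_inj.
by rewrite /= inordK ?modn_small.
Qed.

(* The middle edge of P4 is a minimum cut, but the ends of that edge have
   other edges, so it isolates no vertex. *)
Lemma P4_not_super : ~ super_edge_connected P4.
Proof.
move=> [P4c P4super].
pose F : {set {set P4}} := [set [set v1; v2]].
have Fcut : is_edge_cut F.
  split; first by rewrite sub1set; apply: edgesP.
  apply: (closed_not_connected (a := fun v : P4 => val v < 2) (x := v0) (y := v3)) => // x y.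
  by elim/I4P: x; elim/I4P: y; rewrite /remove_edges /F ?in_set1 //= ?eqxx // setUC eqxx.
have Fmin : is_min_edge_cut F by split=> // F' /(edge_cut_gt0 P4c); rewrite cards1.
have [v Fv] := P4super F Fmin.
have : [set v1; v2] \in incident_edges v by rewrite -Fv set11.
rewrite inE => /andP[_] /set2P[] ev; subst v.
- have : [set v1; v0] \in F by rewrite Fv; apply/incidentP; exists v0.
  by rewrite in_set1 => /eqP/setP/(_ v0); rewrite !inE.
- have : [set v2; v3] \in F by rewrite Fv; apply/incidentP; exists v3.
  by rewrite in_set1 => /eqP/setP/(_ v3); rewrite !inE.
Qed.

Lemma ordS4 : [/\ ordS v0 = v1, ordS v1 = v2, ordS v2 = v3 & ordS v3 = v0].
Proof. by split; apply: val_inj. Qed.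

Lemma C4_colour_changes (b : 'I_4 -> bool) u y : b u -> ~~ b y ->
  exists i j, [/\ i != j, b i != b (ordS i) & b j != b (ordS j)].
Proof.
have [s0 s1 s2 s3] := ordS4.
elim/I4P: u; elim/I4P: y;
case b0: (b v0); case b1: (b v1); case b2: (b v2); case b3: (b v3) => //= _ _;
first [ by exists v0, v1; rewrite s0 s1 ?b0 ?b1 ?b2 ?b3
      | by exists v0, v2; rewrite s0 s2 ?b0 ?b1 ?b2 ?b3
      | by exists v0, v3; rewrite s0 s3 ?b0 ?b1 ?b2 ?b3
      | by exists v1, v2; rewrite s1 s2 ?b0 ?b1 ?b2 ?b3
      | by exists v1, v3; rewrite s1 s3 ?b0 ?b1 ?b2 ?b3
      | by exists v2, v3; rewrite s2 s3 ?b0 ?b1 ?b2 ?b3 ].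
Qed.

Lemma C4_edges_inj (i j : 'I_4) : i != j -> [set i; ordS i] != [set j; ordS j].
Proof.
have [s0 s1 s2 s3] := ordS4.
elim/I4P: i; elim/I4P: j; rewrite ?s0 ?s1 ?s2 ?s3 // => _; apply/eqP => /setP E;
first [ by move: (E v0); rewrite !inE
      | by move: (E v1); rewrite !inE
      | by move: (E v2); rewrite !inE
      | by move: (E v3); rewrite !inE ].
Qed.

Lemma C4_cut_ge2 (F : {set {set C4}}) : is_edge_cut F -> 2 <= #|F|.
Proof.
move=> [_ Fnc]; have [u [y nuy]] := not_connected_pair (v0 : C4) Fnc.
pose b := connect (remove_edges F) u.
have changeF (i : C4) : b i != b (ordS i) -> [set i; ordS i] \in F.
  have hi : @adj C4 i (ordS i) by rewrite /= /C4_adj eqxx.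
  case bi: (b i); case bSi: (b (ordS i)) => // _.
    by apply: (leaving_edge_in_cut bi) => //; rewrite -/b bSi.
  by rewrite set2C; apply: (leaving_edge_in_cut bSi); rewrite -/b ?bi // adjC.
have [i [j [ij ci cj]]] := C4_colour_changes (connect0 _ u) nuy.
have sub : [set [set i; ordS i]; [set j; ordS j]] \subset F.
  by apply/subsetP=> E; rewrite !inE => /orP[]/eqP->; apply: changeF.
by apply: leq_trans (subset_leq_card sub); rewrite cards2 C4_edges_inj.
Qed.

(* Two opposite edges of C4 form a minimum cut, and no vertex lies on both. *)
Lemma C4_not_super : ~ super_edge_connected C4.
Proof.
move=> [_ C4super].
pose F : {set {set C4}} := [set [set v0; v1]; [set v2; v3]].
have Fcut : is_edge_cut F.
  split; first by apply/subsetP=> E; rewrite !inE => /orP[]/eqP->; apply: edgesP.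
  apply: (closed_not_connected (a := fun v : C4 => (0 < val v) && (val v < 3))
                               (x := v1) (y := v0)) => // x y.
  by elim/I4P: x; elim/I4P: y; rewrite /remove_edges /F ?inE //= ?eqxx ?orbT // setUC eqxx ?orbT.
have Fmin : is_min_edge_cut F.
  split=> // F' /C4_cut_ge2 ge2; apply: leq_trans ge2.
  by rewrite cards2; case: (_ != _).
have [v Fv] := C4super F Fmin.
have e01 : [set v0; v1] \in incident_edges v by rewrite -Fv !inE eqxx.
have e23 : [set v2; v3] \in incident_edges v by rewrite -Fv !inE eqxx orbT.
move: e01 e23; rewrite !inE => /andP[_ v01] /andP[_ v23].
by clear Fv; move: v01 v23; elim/I4P: v.
Qed.

Lemma C4_no_two_nonneighbours (a b c : C4) : a != b -> a != c -> b != c ->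
  ~~ adj a b -> ~~ adj a c -> False.
Proof. by elim/I4P: a; elim/I4P: b; elim/I4P: c. Qed.

(* If S maps onto P4 preserving adjacency and non-adjacency, the preimages of
   0, 2, 3 give a vertex of S with two distinct non-neighbours; so S cannot
   embed in C4. *)
Lemma onto_P4_not_in_C4 (S : sgraph) (g : S -> P4) :
  (forall x y, adj x y = adj (g x) (g y)) -> (forall k, exists s, g s = k) ->
  ~ induced_sub S C4.
Proof.
move=> ga onto [h [hi ha]].
have [s0 g0] := onto v0; have [s2 g2] := onto v2; have [s3 g3] := onto v3.
have neq a b : g a != g b -> h a != h b.
  by move=> gab; rewrite (inj_eq hi); apply: contraNneq gab => ->.
apply: (@C4_no_two_nonneighbours (h s0) (h s2) (h s3)).
- by apply: neq; rewrite g0 g2.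
- by apply: neq; rewrite g0 g3.
- by apply: neq; rewrite g2 g3.
- by rewrite -ha ga g0 g2.
- by rewrite -ha ga g0 g3.
Qed.

Lemma window_in_P3 (S : sgraph) (g : S -> P4) w : injective g ->
  (forall x y, adj x y = adj (g x) (g y)) -> (forall s, w <= g s <= w + 2) ->
  induced_sub S P3.
Proof.
move=> gi ga gw.
have lt3 s : g s - w < 3 by have := gw s; lia.
exists (fun s => inord (g s - w) : 'I_3); split.
  move=> s t /(congr1 val); rewrite /= !inordK ?lt3 // => e.
  by apply/gi/ord_inj; have := gw s; have := gw t; lia.
move=> s t; rewrite ga /= /P4_adj /P3_adj !inordK ?lt3 //.
have := gw s; have := gw t => ht hs.
by apply/idP/idP => /orP[]/eqP h; apply/orP; [left|right|left|right]; apply/eqP; lia.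
Qed.

(* If an induced copy of a connected S in P4 misses the vertex k, then S,
   having no edge across k, lies entirely on one side of k, i.e. within
   three consecutive vertices. *)
Lemma missing_vertex_in_P3 (S : sgraph) (g : S -> P4) (k : 'I_4) :
  connected S -> injective g -> (forall x y, adj x y = adj (g x) (g y)) ->
  (forall s, g s != k) -> induced_sub S P3.
Proof.
move=> [[s0 _] Sc] gi ga gk.
have gk' s : (g s : nat) <> k by move/val_inj; apply/eqP/gk.
have below_closed : closed (@adj S) (fun s => g s < k).
  move=> s t; rewrite ga /= /P4_adj => hst; rewrite !unfold_in /=.
  by have := gk' s; have := gk' t; case/orP: hst => /eqP; lia.
have same_side s : (g s < k) = (g s0 < k).
  by have := closed_connect below_closed (Sc s0 s); rewrite !unfold_in /= => ->.
have k4 := ltn_ord k.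
case: (boolP (g s0 < k)) => below.
  apply: (@window_in_P3 _ _ 0 gi ga) => s.
  by move: (same_side s); rewrite below; lia.
apply: (@window_in_P3 _ _ 1 gi ga) => s.
move: (same_side s); rewrite (negbTE below); have := gk' s; have := ltn_ord (g s).
lia.
Qed.

Theorem theorem2p1 (S : sgraph) :
  connected S ->
  ((forall G : sgraph, connected G -> free S G -> super_edge_connected G)
   <-> induced_sub S P3).
Proof.
move=> Sc; split; last exact: super_edge_connected_of_sub_P3.
move=> super_of_free.
have in_P4 : induced_sub S P4.
  by apply: NNPP => /(super_of_free _ P4_connected); apply: P4_not_super.
have in_C4 : induced_sub S C4.
  by apply: NNPP => /(super_of_free _ C4_connected); apply: C4_not_super.
have [g [gi ga]] := in_P4.
case: (classic (forall k, exists s, g s = k)) => [onto | /not_all_ex_not[k gk]].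
  by case: (onto_P4_not_in_C4 ga onto in_C4).
apply: (missing_vertex_in_P3 (k := k) Sc gi ga) => s.
by apply/eqP => gsk; apply: gk; exists s.
Qed.
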